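(* Let $(\mathcal{P},\cdot)$ be an admissible Poisson algebra and let $\varphi:\mathcal{P}\times\mathcal{P}\to\mathcal{P}$ be a skew-symmetric bilinear map which is a derivation of $\bullet$ in each argument, i.e. $\varphi(X\bullet Y,Z)=X\bullet\varphi(Y,Z)+\varphi(X,Z)\bullet Y$ for all $X,Y,Z$ (a Lichnerowicz-Poisson $2$-cochain). Then $\delta_{LP}\varphi=0$ if and only if $\delta^2_{\mathcal{P}}\varphi=0$.
   Context: $\mathbb{K}$ is a field of characteristic different from $2$ and $3$. Associator: $A(X,Y,Z)=(X\cdot Y)\cdot Z-X\cdot(Y\cdot Z)$. An admissible Poisson algebra is a $\mathbb{K}$-vector space $\mathcal{P}$ with a bilinear product $\cdot$ satisfying $3A(X,Y,Z)=(X\cdot Z)\cdot Y+(Y\cdot Z)\cdot X-(Y\cdot X)\cdot Z-(Z\cdot X)\cdot Y$; $\{X,Y\}=\frac12(X\cdot Y-Y\cdot X)$, $X\bullet Y=\frac12(X\cdot Y+Y\cdot X)$. Lichnerowicz-Poisson differential on a skew-symmetric bilinear $\varphi$: $\delta_{LP}\varphi(X_0,X_1,X_2)=\sum_{i=0}^2(-1)^i\{X_i,\varphi(X_0,\dots,\widehat{X_i},\dots,X_2)\}+\sum_{0\le i<j\le2}(-1)^{i+j}\varphi(\{X_i,X_j\},X_k)$ where $k$ is the remaining index. Poisson differential: $\delta^2_{\mathcal{P}}\varphi(X,Y,Z)=3\varphi(X\cdot Y,Z)-3\varphi(X,Y\cdot Z)-\varphi(X\cdot Z,Y)-\varphi(Y\cdot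 Z,X)+\varphi(Y\cdot X,Z)+\varphi(Z\cdot X,Y)+3\varphi(X,Y)\cdot Z-3X\cdot\varphi(Y,Z)-\varphi(X,Z)\cdot Y-\varphi(Y,Z)\cdot X+\varphi(Y,X)\cdot Z+\varphi(Z,X)\cdot Y$. *)

From HB Require Import structures.
From mathcomp Require Import all_boot all_order all_algebra.
Set Implicit Arguments. Unset Strict Implicit. Unset Printing Implicit Defensive.
Import Order.TTheory GRing.Theory Num.Theory.
Local Open Scope ring_scope.

Section AdmPoisson.
Variables (K : fieldType) (P : lmodType K) (mul : P -> P -> P).

Definition bilinear_map (f : P -> P -> P) : Prop :=
  (forall (a : K) (x y z : P), f (a *: x + y) z = a *: f x z + f y z) /\
  (forall (a : K) (x y z : P), f x (a *: y + z) = a *: f x y + f x z).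

Definition assoc (X Y Z : P) : P := mul (mul X Y) Z - mul X (mul Y Z).

Definition admissible_poisson : Prop :=
  forall X Y Z : P,
    3%:R *: assoc X Y Z =
      mul (mul X Z) Y + mul (mul Y Z) X - mul (mul Y X) Z - mul (mul Z X) Y.

Definition pbr (X Y : P) : P := (2%:R)^-1 *: (mul X Y - mul Y X).
Definition jprod (X Y : P) : P := (2%:R)^-1 *: (mul X Y + mul Y X).

Definition skew_sym (phi : P -> P -> P) : Prop := forall X Y, phi X Y = - phi Y X.

Definition jderivation2 (phi : P -> P -> P) : Prop :=
  (forall X Y Z, phi (jprod X Y) Z = jprod X (phi Y Z) + jprod (phi X Z) Y) /\
  (forall X Y Z, phi Z (jprod X Y) = jprod X (phi Z Y) + jprod (phi Z X) Y).

Definition deltaLP (phi : P -> P -> P) (X0 X1 X2 : P) : P :=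
  pbr X0 (phi X1 X2) - pbr X1 (phi X0 X2) + pbr X2 (phi X0 X1)
  - phi (pbr X0 X1) X2 + phi (pbr X0 X2) X1 - phi (pbr X1 X2) X0.

Definition deltaP2 (phi : P -> P -> P) (X Y Z : P) : P :=
  3%:R *: phi (mul X Y) Z - 3%:R *: phi X (mul Y Z)
  - phi (mul X Z) Y - phi (mul Y Z) X + phi (mul Y X) Z + phi (mul Z X) Y
  + 3%:R *: mul (phi X Y) Z - 3%:R *: mul X (phi Y Z)
  - mul (phi X Z) Y - mul (phi Y Z) X + mul (phi Y X) Z + mul (phi Z X) Y.

End AdmPoisson.

From HB Require Import structures.
From mathcomp Require Import all_boot all_order all_algebra.
From mathcomp Require Import ring.
Import GRing.Theory.
Local Open Scope ring_scope.
Set Implicit Arguments. Unset Strict Implicit.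

(* For a skew-symmetric bilinear phi one has the identity
     deltaP2 phi (X,Y,Z) + 2 deltaLP phi (X,Y,Z) = 4 D(X,Y,Z) + 2 D(Y,Z,X),
   where D(X,Y,Z) = phi(X•Y, Z) - X•phi(Y,Z) - phi(X,Z)•Y measures the failure
   of phi to be a derivation of • in its first argument.  For a derivation the
   right-hand side vanishes, so deltaP2 phi = -2 deltaLP phi, and 2 is
   invertible. *)

Section Bilinear.
Variables (K : fieldType) (V : lmodType K) (f : V -> V -> V).
Hypothesis hf : bilinear_map f.

Lemma bilinear_mapDl x y z : f (x + y) z = f x z + f y z.
Proof. by have := hf.1 1 x y z; rewrite !scale1r. Qed.

Lemma bilinear_map0l z : f 0 z = 0.
Proof. by apply: (addrI (f 0 z)); rewrite -bilinear_mapDl !addr0. Qed.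

Lemma bilinear_mapZl a x z : f (a *: x) z = a *: f x z.
Proof. by have := hf.1 a x 0 z; rewrite addr0 bilinear_map0l addr0. Qed.

Lemma bilinear_mapNl x z : f (- x) z = - f x z.
Proof. by rewrite -scaleN1r bilinear_mapZl scaleN1r. Qed.

Lemma bilinear_mapDr x y z : f x (y + z) = f x y + f x z.
Proof. by have := hf.2 1 x y z; rewrite !scale1r. Qed.

Lemma bilinear_map0r x : f x 0 = 0.
Proof. by apply: (addrI (f x 0)); rewrite -bilinear_mapDr !addr0. Qed.

Lemma bilinear_mapZr a x y : f x (a *: y) = a *: f x y.
Proof. by have := hf.2 a x y 0; rewrite addr0 bilinear_map0r addr0. Qed.

Lemma bilinear_mapNr x y : f x (- y) = - f x y.
Proof. by rewrite -scaleN1r bilinear_mapZr scaleN1r. Qed.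

End Bilinear.

(* Identities between K-linear combinations of finitely many vectors reduce to
   coefficientwise identities in K, which [field] can decide. *)
Section LinearCombination.
Variables (K : fieldType) (V : lmodType K) (s : seq V).

Definition lincomb (c : nat -> K) : V := \sum_(i < size s) c i *: s`_i.

Lemma lincombD c1 c2 : lincomb c1 + lincomb c2 = lincomb (fun i => c1 i + c2 i).
Proof. by rewrite -big_split; apply: eq_bigr => i _; rewrite scalerDl. Qed.

Lemma lincombN c : - lincomb c = lincomb (fun i => - c i).
Proof. by rewrite -sumrN; apply: eq_bigr => i _; rewrite scaleNr. Qed.

Lemma lincombZ k c : k *: lincomb c = lincomb (fun i => k * c i).
Proof. by rewrite scaler_sumr; apply: eq_bigr => i _; rewrite scalerA. Qed.

Lemma nth_lincomb j : (j < size s)%N -> s`_j = lincomb (fun i => (i == j)%:R).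
Proof.
move=> lt_j_s; rewrite /lincomb (bigD1 (Ordinal lt_j_s)) //= eqxx scale1r.
rewrite big1 ?addr0 // => i /eqP neq_ij.
by case: eqP => [eq_ij | _]; [case: neq_ij; apply: val_inj | rewrite scale0r].
Qed.

Lemma eq_lincomb c1 c2 :
  (forall i, (i < size s)%N -> c1 i = c2 i) -> lincomb c1 = lincomb c2.
Proof. by move=> eq_c; apply: eq_bigr => i _; rewrite eq_c. Qed.

End LinearCombination.

Section Cochain.
Variables (K : fieldType) (P : lmodType K) (mul : P -> P -> P) (phi : P -> P -> P).

Definition jderivation_defect (X Y Z : P) : P :=
  phi (jprod mul X Y) Z - (jprod mul X (phi Y Z) + jprod mul (phi X Z) Y).

Hypotheses (h2 : (2%:R : K) != 0) (hmul : bilinear_map mul)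
  (hphi : bilinear_map phi) (hskew : skew_sym phi).

Lemma deltaP2_add_deltaLP X Y Z :
  deltaP2 mul phi X Y Z + 2%:R *: deltaLP mul phi X Y Z =
  4%:R *: jderivation_defect X Y Z + 2%:R *: jderivation_defect Y Z X.
Proof.
rewrite /deltaP2 /deltaLP /jderivation_defect /pbr /jprod.
rewrite (hskew X (mul Y Z)) (hskew Y X) (hskew Z X).
rewrite !(bilinear_mapDl hmul, bilinear_mapNl hmul, bilinear_mapZl hmul,
          bilinear_mapDr hmul, bilinear_mapNr hmul, bilinear_mapZr hmul,
          bilinear_mapDl hphi, bilinear_mapNl hphi, bilinear_mapZl hphi).
pose s := [:: phi (mul X Y) Z; phi (mul Y X) Z; phi (mul X Z) Y; phi (mul Z X) Y;
  phi (mul Y Z) X; phi (mul Z Y) X; mul (phi X Y) Z; mul Z (phi X Y);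
  mul (phi X Z) Y; mul Y (phi X Z); mul (phi Y Z) X; mul X (phi Y Z)].
rewrite -[phi (mul X Y) Z]/s`_0 -[phi (mul Y X) Z]/s`_1 -[phi (mul X Z) Y]/s`_2.
rewrite -[phi (mul Z X) Y]/s`_3 -[phi (mul Y Z) X]/s`_4 -[phi (mul Z Y) X]/s`_5.
rewrite -[mul (phi X Y) Z]/s`_6 -[mul Z (phi X Y)]/s`_7 -[mul (phi X Z) Y]/s`_8.
rewrite -[mul Y (phi X Z)]/s`_9 -[mul (phi Y Z) X]/s`_10 -[mul X (phi Y Z)]/s`_11.
rewrite !nth_lincomb // !(lincombZ, lincombN, lincombD).
apply: eq_lincomb => i; rewrite [size s]/=.
by do 12! (case: i => [|i] /=; first by move=> _; field).
Qed.

End Cochain.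

Lemma pchar2_neq0 (K : fieldType) : (2 \notin [pchar K])%N -> (2%:R : K) != 0.
Proof. by apply: contra => eq20; rewrite inE /= eq20. Qed.

Unset Implicit Arguments.

Theorem mainTheorem18 (K : fieldType) (P : lmodType K) (mul : P -> P -> P)
    (phi : P -> P -> P)
    (hK2 : (2 \notin [pchar K])%N) (hK3 : (3 \notin [pchar K])%N)
    (hmul : bilinear_map mul) (hadm : admissible_poisson mul)
    (hphi : bilinear_map phi) (hskew : skew_sym phi)
    (hder : jderivation2 mul phi) :
  (forall X Y Z : P, deltaLP mul phi X Y Z = 0) <->
  (forall X Y Z : P, deltaP2 mul phi X Y Z = 0).
Proof.
have h2 := pchar2_neq0 hK2.
have deltaP2_deltaLP X Y Z :
    deltaP2 mul phi X Y Z + 2%:R *: deltaLP mul phi X Y Z = 0.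
  rewrite (deltaP2_add_deltaLP h2 hmul hphi hskew) /jderivation_defect.
  by rewrite !hder.1 !subrr !scaler0 addr0.
split=> delta0 X Y Z; have := deltaP2_deltaLP X Y Z; rewrite delta0.
  by rewrite scaler0 addr0.
by rewrite add0r => /eqP; rewrite scaler_eq0 (negbTE h2) => /eqP.
Qed.
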